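(* Let $A\in\mathbb{T}^{m\times n}$, $B\in\mathbb{T}^{m\times q}$ and let $P\in\mathbb{R}^{q\times n}$ be a row-stochastic matrix (nonnegative entries, each row summing to $1$). Assume every row of $B$ has at least one finite entry, every column of $A$ has at least one finite entry, and every row of $A$ has at least one finite entry. Let $F=A^\sharp\circ B\circ P$ (a self-map of $\mathbb{T}^n$) and $F^\ast=(B^\top)^\sharp\circ P\circ A^\top$ (a self-map of $\mathbb{T}^m$), i.e. $F(x)=A^\sharp(B\odot(Px))$ and $F^\ast(y)=(B^\top)^\sharp(P(A^\top\odot y))$. Then \[ \overline{\mathrm{cw}}(F^\ast) = -\,\underline{\mathrm{cw}}(F). \]
   Context: $\mathbb{T}=\mathbb{R}\cup\{-\infty\}$ with tropical operations $a\oplus b=\max(a,b)$, $a\odot b=a+b$. For a matrix $C\in\mathbb{T}^{r\times s}$ and $z\in\mathbb{T}^s$, $(C\odot z)_i=\max_k (C_{ik}+z_k)$. For $C\in\mathbb{T}^{r\times s}$, the adjoint $C^\sharp$ maps $y\in(\mathbb{R}\cup\{\pm\infty\})^r$ to the vector with entries $C^\sharp(y)_j=\min_i(-C_{ij}+y_i)$, with the convention $(+\infty)+(-\infty)=(-\infty)+(+\infty)=+\infty$. $C^\top$ is the transpose. For a real matrix $P$ and $z\in\mathbb{T}^s$, $Pz$ is the usual matrix–vector product with the convention $0\cdot(-\infty)=0$. $\mathbb{T}^n$ is ordered entrywise; for $\lambda\in\mathbb{R}$, $\lambda+z$ is entrywise addition. For a self-map $G$ of $\mathbb{T}^d$: $\overline{\mathrm{cw}}(G)=\inf\{\mu\in\mathbb{R}: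 \exists z\in\mathbb{R}^d,\ G(z)\le\mu+z\}$ and $\underline{\mathrm{cw}}(G)=\sup\{\mu\in\mathbb{R}: \exists z\in\mathbb{R}^d,\ G(z)\ge\mu+z\}$. *)

From Stdlib Require Import Reals Lra ClassicalEpsilon.
Open Scope R_scope.

Inductive ER : Type := Fin (r : R) | PInf | NInf.

(** Tropical numbers T = R ∪ {-∞}; [None] is -∞. *)
Definition trop := option R.

Definition trop_to_ER (a : trop) : ER :=
  match a with Some r => Fin r | None => NInf end.

Definition ER_le (x y : ER) : Prop :=
  match x, y with
  | NInf, _ => True
  | _, PInf => True
  | Fin a, Fin b => a <= b
  | _, _ => False
  end.

Definition ER_opp (x : ER) : ER :=
  match x with Fin a => Fin (- a) | PInf => NInf | NInf => PInf end.

(** Addition with (-∞) absorbing (used for tropical products). *)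
Definition ER_add_low (x y : ER) : ER :=
  match x, y with
  | NInf, _ | _, NInf => NInf
  | PInf, _ | _, PInf => PInf
  | Fin a, Fin b => Fin (a + b)
  end.

(** Addition with (+∞)+(-∞) = (-∞)+(+∞) = +∞ (used for the adjoint). *)
Definition ER_add_up (x y : ER) : ER :=
  match x, y with
  | PInf, _ | _, PInf => PInf
  | NInf, _ | _, NInf => NInf
  | Fin a, Fin b => Fin (a + b)
  end.

Definition ER_max (x y : ER) : ER :=
  match x, y with
  | PInf, _ | _, PInf => PInf
  | NInf, z | z, NInf => z
  | Fin a, Fin b => Fin (Rmax a b)
  end.

Definition ER_min (x y : ER) : ER :=
  match x, y with
  | NInf, _ | _, NInf => NInf
  | PInf, z | z, PInf => z
  | Fin a, Fin b => Fin (Rmin a b)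
  end.

Fixpoint ER_bigmax (k : nat) (f : nat -> ER) : ER :=
  match k with O => NInf | S k' => ER_max (ER_bigmax k' f) (f k') end.
Fixpoint ER_bigmin (k : nat) (f : nat -> ER) : ER :=
  match k with O => PInf | S k' => ER_min (ER_bigmin k' f) (f k') end.
Fixpoint ER_bigsum (k : nat) (f : nat -> ER) : ER :=
  match k with O => Fin 0 | S k' => ER_add_low (ER_bigsum k' f) (f k') end.
Fixpoint Rbigsum (k : nat) (f : nat -> R) : R :=
  match k with O => 0 | S k' => Rbigsum k' f + f k' end.

(** Scalar multiplication of a real by an extended real, with 0·(±∞) = 0. *)
Definition ER_scal (p : R) (x : ER) : ER :=
  match x with
  | Fin a => Fin (p * a)
  | PInf => if Req_EM_T p 0 then Fin 0 else if Rlt_dec 0 p then PInf else NInf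
  | NInf => if Req_EM_T p 0 then Fin 0 else if Rlt_dec 0 p then NInf else PInf
  end.

(** Matrices are functions of row and column indices; vectors are functions
    of an index; only indices below the dimensions are ever used. *)
Definition tmat := nat -> nat -> trop.
Definition vec := nat -> ER.

Definition tmul (s : nat) (C : tmat) (z : vec) : vec :=
  fun i => ER_bigmax s (fun k => ER_add_low (trop_to_ER (C i k)) (z k)).

Definition tadj (r : nat) (C : tmat) (y : vec) : vec :=
  fun j => ER_bigmin r (fun i => ER_add_up (ER_opp (trop_to_ER (C i j))) (y i)).

Definition ttr (C : tmat) : tmat := fun i j => C j i.

Definition rmul (s : nat) (P : nat -> nat -> R) (z : vec) : vec :=
  fun i => ER_bigsum s (fun k => ER_scal (P i k) (z k)).

Definition row_stochastic (q n : nat) (P : nat -> nat -> R) : Prop :=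
  (forall i k, (i < q)%nat -> (k < n)%nat -> 0 <= P i k) /\
  (forall i, (i < q)%nat -> Rbigsum n (fun k => P i k) = 1).

Definition ER_sup (S : R -> Prop) : ER :=
  match excluded_middle_informative (exists x, S x) with
  | left ne =>
      match excluded_middle_informative (bound S) with
      | left b => Fin (proj1_sig (completeness S b ne))
      | right _ => PInf
      end
  | right _ => NInf
  end.

Definition ER_inf (S : R -> Prop) : ER :=
  ER_opp (ER_sup (fun x => S (- x))).

Definition cw_upper (d : nat) (G : vec -> vec) : ER :=
  ER_inf (fun mu => exists z : nat -> R,
    forall i, (i < d)%nat -> ER_le (G (fun k => Fin (z k)) i) (Fin (mu + z i))).

Definition cw_lower (d : nat) (G : vec -> vec) : ER :=
  ER_sup (fun mu => exists z : nat -> R,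
    forall i, (i < d)%nat -> ER_le (Fin (mu + z i)) (G (fun k => Fin (z k)) i)).

(** By the duality [C^♯ y = -(C^⊤ ⊙ (-y))], the map [F^*] is the conjugate
    by negation of the rotation [H ∘ A^♯] of [F = A^♯ ∘ H], where
    [H x = B ⊙ (P x)]; conjugation
    by negation exchanges upper and lower cycle-time bounds and flips their
    sign.  For monotone, additively homogeneous maps [f], [g] sending
    real vectors to real vectors, [μ + z ≤ g (f z)] yields
    [μ + f z ≤ f (g (f z))], so [g ∘ f] and [f ∘ g] have the same lower
    cycle-time bound. *)
From Stdlib Require Import Reals Lra Lia FunctionalExtensionality PropExtensionality.
Open Scope R_scope.

Lemma ER_le_refl x : ER_le x x.
Proof. destruct x; simpl; auto with real. Qed.

Lemma ER_le_trans x y z : ER_le x y -> ER_le y z -> ER_le x z.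
Proof. destruct x, y, z; simpl; tauto || lra. Qed.

Lemma ER_opp_involutive x : ER_opp (ER_opp x) = x.
Proof. destruct x; simpl; auto. now rewrite Ropp_involutive. Qed.

Lemma ER_le_opp x y : ER_le (ER_opp x) (ER_opp y) <-> ER_le y x.
Proof. destruct x, y; simpl; tauto || lra. Qed.

Lemma ER_le_max_l a b : ER_le a (ER_max a b).
Proof. destruct a, b; simpl; auto using Rmax_l with real. Qed.

Lemma ER_le_max_r a b : ER_le b (ER_max a b).
Proof. destruct a, b; simpl; auto using Rmax_r with real. Qed.

Lemma ER_max_lub a b x : ER_le a x -> ER_le b x -> ER_le (ER_max a b) x.
Proof. destruct a, b, x; simpl; auto using Rmax_lub. Qed.

Lemma ER_add_low_monotone x x' y y' :
  ER_le x x' -> ER_le y y' -> ER_le (ER_add_low x y) (ER_add_low x' y').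
Proof. destruct x, x', y, y'; simpl; tauto || lra. Qed.

Lemma ER_opp_max a b : ER_opp (ER_max a b) = ER_min (ER_opp a) (ER_opp b).
Proof. destruct a, b; simpl; auto. now rewrite Ropp_Rmax. Qed.

Lemma ER_opp_add_low x y : ER_opp (ER_add_low x y) = ER_add_up (ER_opp x) (ER_opp y).
Proof. destruct x, y; simpl; auto. f_equal; ring. Qed.

Lemma ER_opp_shift c x : ER_opp (ER_add_low (Fin c) x) = ER_add_low (Fin (- c)) (ER_opp x).
Proof. destruct x; simpl; auto. f_equal; ring. Qed.

Lemma ER_max_shift c a b :
  ER_max (ER_add_low (Fin c) a) (ER_add_low (Fin c) b) = ER_add_low (Fin c) (ER_max a b).
Proof.
  destruct a, b; simpl; auto.
  f_equal. unfold Rmax. destruct (Rle_dec (c + r) (c + r0)), (Rle_dec r r0); lra.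
Qed.

Lemma ER_bigmax_ub k f i : (i < k)%nat -> ER_le (f i) (ER_bigmax k f).
Proof.
  induction k as [|k IH]; intros Hi; [lia|]. simpl.
  destruct (Nat.eq_dec i k) as [->|Hik]; [apply ER_le_max_r|].
  eapply ER_le_trans; [apply IH; lia|apply ER_le_max_l].
Qed.

Lemma ER_bigmax_lub k f x :
  (forall i, (i < k)%nat -> ER_le (f i) x) -> ER_le (ER_bigmax k f) x.
Proof.
  induction k as [|k IH]; intros H; [destruct x; exact I|].
  apply ER_max_lub; [apply IH; auto|apply H; lia].
Qed.

Lemma ER_bigmax_monotone k f g :
  (forall i, (i < k)%nat -> ER_le (f i) (g i)) -> ER_le (ER_bigmax k f) (ER_bigmax k g).
Proof.
  intros H. apply ER_bigmax_lub. intros i Hi.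
  eapply ER_le_trans; [apply H, Hi|apply ER_bigmax_ub, Hi].
Qed.

Lemma ER_bigmax_ext k f g :
  (forall i, (i < k)%nat -> f i = g i) -> ER_bigmax k f = ER_bigmax k g.
Proof.
  induction k as [|k IH]; intros H; simpl; auto.
  rewrite IH, H by auto. reflexivity.
Qed.

Lemma ER_bigmax_not_PInf k f :
  (forall i, (i < k)%nat -> f i <> PInf) -> ER_bigmax k f <> PInf.
Proof.
  induction k as [|k IH]; intros H; simpl; [discriminate|].
  assert (Hk : f k <> PInf) by (apply H; lia).
  assert (Hmax : ER_bigmax k f <> PInf) by (apply IH; auto).
  destruct (ER_bigmax k f), (f k); simpl; congruence.
Qed.

Lemma ER_opp_bigmax k f : ER_opp (ER_bigmax k f) = ER_bigmin k (fun i => ER_opp (f i)).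
Proof. induction k as [|k IH]; simpl; auto. now rewrite ER_opp_max, IH. Qed.

Lemma ER_bigmax_shift k c f :
  ER_bigmax k (fun i => ER_add_low (Fin c) (f i)) = ER_add_low (Fin c) (ER_bigmax k f).
Proof. induction k as [|k IH]; [reflexivity|]. cbn [ER_bigmax]. now rewrite IH, ER_max_shift. Qed.

Definition ER_real (x : ER) : Prop := exists r, x = Fin r.

Definition fin (x : ER) : R := match x with Fin r => r | _ => 0 end.

Lemma ER_real_fin x : ER_real x -> x = Fin (fin x).
Proof. now intros [r ->]. Qed.

Definition monotone_map (a b : nat) (f : vec -> vec) : Prop :=
  forall x y, (forall k, (k < a)%nat -> ER_le (x k) (y k)) ->
  forall i, (i < b)%nat -> ER_le (f x i) (f y i).

Definition add_homogeneous (b : nat) (f : vec -> vec) : Prop :=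
  forall c (z : nat -> R) i, (i < b)%nat ->
  f (fun k => Fin (c + z k)) i = ER_add_low (Fin c) (f (fun k => Fin (z k)) i).

Definition real_valued (b : nat) (f : vec -> vec) : Prop :=
  forall (z : nat -> R) i, (i < b)%nat -> ER_real (f (fun k => Fin (z k)) i).

Lemma monotone_map_comp a b c f g :
  monotone_map a b f -> monotone_map b c g -> monotone_map a c (fun x => g (f x)).
Proof. intros Hf Hg x y Hxy. apply Hg, Hf, Hxy. Qed.

Lemma tmul_monotone s r C : monotone_map s r (tmul s C).
Proof.
  intros x y Hxy i _. apply ER_bigmax_monotone. intros k Hk.
  apply ER_add_low_monotone; [apply ER_le_refl|apply Hxy, Hk].
Qed.

Lemma tmul_ext s C x y i :
  (forall k, (k < s)%nat -> x k = y k) -> tmul s C x i = tmul s C y i.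
Proof. intros H. apply ER_bigmax_ext. intros k Hk. now rewrite H. Qed.

Lemma tmul_homogeneous s r C : add_homogeneous r (tmul s C).
Proof.
  intros c z i _. unfold tmul. rewrite <- ER_bigmax_shift.
  apply ER_bigmax_ext. intros k _. destruct (C i k); simpl; auto. f_equal; ring.
Qed.

Lemma tmul_real s C z i :
  (exists k, (k < s)%nat /\ C i k <> None) -> ER_real (tmul s C (fun k => Fin (z k)) i).
Proof.
  intros [k [Hk HC]]. destruct (C i k) as [b|] eqn:Eb; [|congruence].
  assert (Hlow : ER_le (Fin (b + z k)) (tmul s C (fun k => Fin (z k)) i)).
  { change (Fin (b + z k)) with (ER_add_low (trop_to_ER (Some b)) (Fin (z k))).
    rewrite <- Eb. exact (ER_bigmax_ub s _ k Hk). }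
  assert (Htop : tmul s C (fun k => Fin (z k)) i <> PInf).
  { apply ER_bigmax_not_PInf. intros l _. destruct (C i l); discriminate. }
  destruct (tmul s C _ i); simpl in *; [eexists; reflexivity|congruence|contradiction].
Qed.

Lemma tadj_eq_opp_tmul r C y j :
  tadj r C y j = ER_opp (tmul r (ttr C) (fun i => ER_opp (y i)) j).
Proof.
  unfold tadj, tmul, ttr. rewrite ER_opp_bigmax. f_equal.
  apply functional_extensionality. intros i.
  now rewrite ER_opp_add_low, ER_opp_involutive.
Qed.

Lemma tmul_ttr_eq_opp_tadj r C y j :
  tmul r (ttr C) y j = ER_opp (tadj r C (fun i => ER_opp (y i)) j).
Proof.
  rewrite tadj_eq_opp_tmul, ER_opp_involutive. f_equal.
  apply functional_extensionality. intros i. now rewrite ER_opp_involutive.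
Qed.

Lemma tadj_monotone r s C : monotone_map r s (tadj r C).
Proof.
  intros x y Hxy j Hj. rewrite !tadj_eq_opp_tmul, ER_le_opp.
  apply (tmul_monotone r s (ttr C)); auto.
  intros i Hi. apply ER_le_opp, Hxy, Hi.
Qed.

Lemma tadj_homogeneous r s C : add_homogeneous s (tadj r C).
Proof.
  intros c z j Hj. rewrite !tadj_eq_opp_tmul. simpl.
  replace (fun i => Fin (- (c + z i))) with (fun i => Fin (- c + - z i))
    by (apply functional_extensionality; intros i; f_equal; ring).
  rewrite (tmul_homogeneous r s (ttr C) (- c) (fun i => - z i)) by auto.
  rewrite ER_opp_shift, Ropp_involutive. reflexivity.
Qed.

Lemma tadj_real r C z j :
  (exists i, (i < r)%nat /\ C i j <> None) -> ER_real (tadj r C (fun k => Fin (z k)) j).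
Proof.
  intros HC. rewrite tadj_eq_opp_tmul.
  destruct (tmul_real r (ttr C) (fun k => - z k) j HC) as [t Ht].
  exists (- t). simpl. now rewrite Ht.
Qed.

Lemma ER_scal_monotone p x y : 0 <= p -> ER_le x y -> ER_le (ER_scal p x) (ER_scal p y).
Proof.
  intros Hp Hxy. destruct x, y; simpl in *; try contradiction;
    repeat destruct Req_EM_T; repeat destruct Rlt_dec; subst; simpl; auto; nra.
Qed.

Lemma ER_bigsum_monotone k f g :
  (forall l, (l < k)%nat -> ER_le (f l) (g l)) -> ER_le (ER_bigsum k f) (ER_bigsum k g).
Proof.
  induction k as [|k IH]; intros H; [apply ER_le_refl|].
  apply ER_add_low_monotone; [apply IH; auto|apply H; lia].
Qed.

Lemma rmul_monotone n q P :
  (forall i k, (i < q)%nat -> (k < n)%nat -> 0 <= P i k) -> monotone_map n q (rmul n P).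
Proof.
  intros HP x y Hxy i Hi. apply ER_bigsum_monotone. intros l Hl.
  apply ER_scal_monotone; auto.
Qed.

Lemma rmul_real n P z k :
  rmul n P (fun l => Fin (z l)) k = Fin (Rbigsum n (fun l => P k l * z l)).
Proof. unfold rmul. induction n as [|n IH]; [reflexivity|]. cbn [ER_bigsum]. now rewrite IH. Qed.

Lemma rmul_opp n P v k :
  (forall l, (l < n)%nat -> ER_real (v l)) ->
  rmul n P (fun l => ER_opp (v l)) k = ER_opp (rmul n P v k).
Proof.
  unfold rmul. induction n as [|n IH]; intros Hv; cbn [ER_bigsum].
  - simpl. now rewrite Ropp_0.
  - destruct (Hv n) as [r Hr]; [lia|]. rewrite IH, Hr by auto. simpl.
    clear IH Hv Hr. destruct (ER_bigsum n _); simpl; auto. f_equal. ring.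
Qed.

Lemma Rbigsum_mul_shift n (p z : nat -> R) c :
  Rbigsum n (fun l => p l * (c + z l)) = c * Rbigsum n p + Rbigsum n (fun l => p l * z l).
Proof. induction n as [|n IH]; simpl; [ring|]. rewrite IH. ring. Qed.

Lemma tmul_rmul_homogeneous m n q B P :
  row_stochastic q n P -> add_homogeneous m (fun x => tmul q B (rmul n P x)).
Proof.
  intros [_ Hsum] c z i Hi.
  assert (Hreal : forall w, rmul n P (fun l => Fin (w l))
                    = fun k => Fin (Rbigsum n (fun l => P k l * w l)))
    by (intros w; apply functional_extensionality, rmul_real).
  rewrite !Hreal.
  rewrite (tmul_ext q B _ (fun k => Fin (c + Rbigsum n (fun l => P k l * z l)))).
  - exact (tmul_homogeneous q m B c _ i Hi).
  - intros k Hk. rewrite Rbigsum_mul_shift, Hsum by exact Hk. f_equal. ring.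
Qed.

Lemma tmul_rmul_real m n q B P :
  (forall i, (i < m)%nat -> exists k, (k < q)%nat /\ B i k <> None) ->
  real_valued m (fun x => tmul q B (rmul n P x)).
Proof.
  intros HB z i Hi. cbv beta.
  replace (rmul n P (fun l => Fin (z l)))
    with (fun k => Fin (Rbigsum n (fun l => P k l * z l)))
    by (apply functional_extensionality; intros k; symmetry; apply rmul_real).
  apply tmul_real, HB, Hi.
Qed.

Definition is_subeigenvalue (d : nat) (G : vec -> vec) (mu : R) : Prop :=
  exists z : nat -> R, forall i, (i < d)%nat ->
    ER_le (Fin (mu + z i)) (G (fun k => Fin (z k)) i).

Definition is_supereigenvalue (d : nat) (G : vec -> vec) (mu : R) : Prop :=
  exists z : nat -> R, forall i, (i < d)%nat ->
    ER_le (G (fun k => Fin (z k)) i) (Fin (mu + z i)).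

Lemma subeigenvalue_rotate a b f g mu :
  monotone_map a b f -> add_homogeneous b f -> real_valued b f -> monotone_map b a g ->
  is_subeigenvalue a (fun x => g (f x)) mu -> is_subeigenvalue b (fun y => f (g y)) mu.
Proof.
  intros Hfm Hfh Hfr Hgm [z Hz].
  set (y := fun i => fin (f (fun k => Fin (z k)) i)).
  assert (Hy : forall i, (i < b)%nat -> f (fun k => Fin (z k)) i = Fin (y i))
    by (intros i Hi; apply ER_real_fin, Hfr, Hi).
  assert (Hzy : forall j, (j < a)%nat ->
                  ER_le (Fin (mu + z j)) (g (fun k => Fin (y k)) j)).
  { intros j Hj. eapply ER_le_trans; [apply Hz, Hj|].
    apply Hgm; auto. intros k Hk. rewrite Hy by exact Hk. apply ER_le_refl. }
  exists y. intros i Hi.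
  replace (Fin (mu + y i)) with (f (fun k => Fin (mu + z k)) i)
    by (rewrite Hfh, Hy by exact Hi; reflexivity).
  apply Hfm; auto.
Qed.

Lemma cw_lower_rotate a b f g :
  monotone_map a b f -> add_homogeneous b f -> real_valued b f ->
  monotone_map b a g -> add_homogeneous a g -> real_valued a g ->
  cw_lower a (fun x => g (f x)) = cw_lower b (fun y => f (g y)).
Proof.
  intros. change (ER_sup (is_subeigenvalue a (fun x => g (f x)))
                  = ER_sup (is_subeigenvalue b (fun y => f (g y)))).
  f_equal. apply functional_extensionality. intros mu.
  apply propositional_extensionality. split; apply subeigenvalue_rotate; auto.
Qed.

Lemma supereigenvalue_opp_conj d G mu :
  is_supereigenvalue d (fun y i => ER_opp (G (fun k => ER_opp (y k)) i)) (- mu)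
  <-> is_subeigenvalue d G mu.
Proof.
  split; intros [z Hz]; exists (fun k => - z k); intros i Hi;
    specialize (Hz i Hi); cbv beta in *; apply ER_le_opp.
  - replace (ER_opp (Fin (mu + - z i))) with (Fin (- mu + z i))
      by (simpl; f_equal; ring).
    exact Hz.
  - replace (fun k => ER_opp (Fin (- z k))) with (fun k => Fin (z k))
      by (apply functional_extensionality; intros k; simpl; now rewrite Ropp_involutive).
    rewrite ER_opp_involutive.
    replace (ER_opp (Fin (- mu + - z i))) with (Fin (mu + z i))
      by (simpl; f_equal; ring).
    exact Hz.
Qed.

Lemma cw_upper_opp_conj d G :
  cw_upper d (fun y i => ER_opp (G (fun k => ER_opp (y k)) i)) = ER_opp (cw_lower d G).
Proof.
  unfold cw_upper, ER_inf. f_equal.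
  change (cw_lower d G) with (ER_sup (is_subeigenvalue d G)). f_equal.
  apply functional_extensionality. intros mu.
  apply propositional_extensionality, supereigenvalue_opp_conj.
Qed.

Lemma cw_upper_ext d G1 G2 :
  (forall (z : nat -> R) i, (i < d)%nat ->
     G1 (fun k => Fin (z k)) i = G2 (fun k => Fin (z k)) i) ->
  cw_upper d G1 = cw_upper d G2.
Proof.
  intros H. unfold cw_upper, ER_inf. do 3 f_equal.
  apply functional_extensionality. intros mu. apply propositional_extensionality.
  split; intros [z Hz]; exists z; intros i Hi; [rewrite <- H|rewrite H]; auto.
Qed.

Lemma dual_map_opp_conj m n q A B P (z : nat -> R) i :
  (forall j, (j < n)%nat -> exists i, (i < m)%nat /\ A i j <> None) ->
  tadj q (ttr B) (rmul n P (tmul m (ttr A) (fun k => Fin (z k)))) i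
  = ER_opp (tmul q B (rmul n P (tadj m A (fun k => ER_opp (Fin (z k))))) i).
Proof.
  intros HA. rewrite tadj_eq_opp_tmul. change (ttr (ttr B)) with B.
  do 2 f_equal. apply functional_extensionality. intros k.
  replace (tmul m (ttr A) (fun k => Fin (z k)))
    with (fun j => ER_opp (tadj m A (fun i => ER_opp (Fin (z i))) j))
    by (apply functional_extensionality; intros j; symmetry; apply tmul_ttr_eq_opp_tadj).
  rewrite rmul_opp, ER_opp_involutive; [reflexivity|].
  intros l Hl. exact (tadj_real m A (fun k => - z k) l (HA l Hl)).
Qed.

Theorem mainTheorem2 (m n q : nat) (A B : tmat) (P : nat -> nat -> R)
  (hP : row_stochastic q n P)
  (hB : forall i, (i < m)%nat -> exists k, (k < q)%nat /\ B i k <> None)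
  (hAcol : forall j, (j < n)%nat -> exists i, (i < m)%nat /\ A i j <> None)
  (hArow : forall i, (i < m)%nat -> exists j, (j < n)%nat /\ A i j <> None) :
  let F := fun x : vec => tadj m A (tmul q B (rmul n P x)) in
  let Fstar := fun y : vec => tadj q (ttr B) (rmul n P (tmul m (ttr A) y)) in
  cw_upper m Fstar = ER_opp (cw_lower n F).
Proof.
  intros F Fstar.
  set (H := fun x => tmul q B (rmul n P x)).
  rewrite (cw_upper_ext m Fstar (fun (y : vec) i => ER_opp (H (tadj m A (fun k => ER_opp (y k))) i)))
    by (intros z i _; apply dual_map_opp_conj, hAcol).
  rewrite (cw_upper_opp_conj m (fun y : vec => H (tadj m A y))). f_equal. symmetry.
  apply (cw_lower_rotate n m H (tadj m A)).
  - apply (monotone_map_comp n q m (rmul n P) (tmul q B));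
      [apply rmul_monotone, hP|apply tmul_monotone].
  - apply tmul_rmul_homogeneous, hP.
  - apply tmul_rmul_real, hB.
  - apply tadj_monotone.
  - apply tadj_homogeneous.
  - intros z j Hj. apply tadj_real, hAcol, Hj.
Qed.
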